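(* Let $K\subset\mathbb{R}^n$ be a nonempty compact convex set and let $\{H_m\}_{m\in\mathbb{N}}$ be a sequence of linear subspaces of $\mathbb{R}^n$ (not necessarily of the same dimension) such that the sequence \[K_m:=M_{H_m}\cdots M_{H_1}K\] converges in the Hausdorff metric to a compact convex set $L$. Then for every nonempty compact set $\tilde K\subset\mathbb{R}^n$ with $\mathrm{conv}(\tilde K)=K$, the sequence $\tilde K_m:=M_{H_m}\cdots M_{H_1}\tilde K$ also converges in the Hausdorff metric to $L$.
   Context: For a linear subspace $H$, $R_Hx=2(x|H)-x$ is the reflection with respect to $H$ ($x|H$ the orthogonal projection). The Minkowski symmetrization is $M_HC:=\frac12(C+R_HC)$, with $X+Y=\{x+y:x\in X,y\in Y\}$ and $tX=\{tx:x\in X\}$. $\mathrm{conv}$ denotes convex hull. *)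

From HB Require Import structures.
From mathcomp Require Import all_boot all_order all_algebra.
From mathcomp Require Import all_classical all_reals all_analysis.
Set Implicit Arguments. Unset Strict Implicit. Unset Printing Implicit Defensive.
Import Order.TTheory GRing.Theory Num.Theory.
Import numFieldNormedType.Exports.
Local Open Scope classical_set_scope.
Local Open Scope ring_scope.

Section Defs.
Variables (R : realType) (n : nat).
Notation vec := 'rV[R]_n.

Definition dotp (x y : vec) : R := (x *m y^T) 0 0.
Definition enorm (x : vec) : R := Num.sqrt (dotp x x).

(* A linear subspace H of R^n is represented as the row space of a matrix
   H : 'M[R]_n (every subspace arises this way). *)
Definition in_sub (H : 'M[R]_n) (x : vec) : Prop := (x <= H)%MS.

Definition oproj (H : 'M[R]_n) (x : vec) : vec :=
  xget 0 [set p | in_sub H p /\ forall h, in_sub H h -> dotp (x - p) h = 0].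

Definition refl (H : 'M[R]_n) (x : vec) : vec := 2%:R *: oproj H x - x.

Definition msym (H : 'M[R]_n) (C : set vec) : set vec :=
  [set z | exists x y, C x /\ C y /\ z = 2^-1 *: (x + refl H y)].

(* K_m = M_{H_m} ... M_{H_1} K, with the sequence H indexed from 0:
   iter_msym H K m = M_{H (m-1)} ... M_{H 0} K *)
Fixpoint iter_msym (H : nat -> 'M[R]_n) (K : set vec) (m : nat) : set vec :=
  match m with
  | 0 => K
  | m'.+1 => msym (H m') (iter_msym H K m')
  end.

Definition conv_hull (A : set vec) : set vec :=
  [set x | forall C, convex_set C -> A `<=` C -> C x].

Definition enbhd (B : set vec) (e : R) : set vec :=
  [set x | exists2 y, B y & enorm (x - y) <= e].

Definition hausdorff_dist (A B : set vec) : R :=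
  inf [set e : R | 0 <= e /\ A `<=` enbhd B e /\ B `<=` enbhd A e].

Definition hconv (K : nat -> set vec) (L : set vec) : Prop :=
  (fun m => hausdorff_dist (K m) L) @ \oo --> (0 : R).

End Defs.

From HB Require Import structures.
From mathcomp Require Import all_boot all_order all_algebra.
From mathcomp Require Import all_classical all_reals all_analysis.
From mathcomp Require Import ring lra.
Import Order.TTheory GRing.Theory Num.Theory.
Import numFieldNormedType.Exports.
Local Open Scope classical_set_scope.
Local Open Scope ring_scope.
Set Implicit Arguments. Unset Strict Implicit. Unset Printing Implicit Defensive.

(* Since Kt is contained in K = conv Kt, each Kt_m is contained in K_m, and it
   suffices to show that every point of K_m lies within D (3/4)^m of Kt_m,
   where D is the diameter of K.  For m = 0, a point z of K = conv Kt cannot be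
   separated from Kt by a hyperplane, so for every vector v some y in Kt has
   <v, y - z> <= 0.  This one-sided information survives symmetrization if it
   is carried in the quadratic form |w - z|^2 + 2 <v, w - z> <= t^2 for all
   "tilts" v: approximating the two summands of z = (x + R_H y)/2 against
   suitably chosen tilts makes the cross term <e1, R_H e2> cancel, and the
   squared bound is halved at each step. *)

Section InnerProduct.
Variables (R : realType) (n : nat).
Notation vec := 'rV[R]_n.
Implicit Types x y z : vec.

Lemma dotpE x y : dotp x y = \sum_i x 0 i * y 0 i.
Proof. by rewrite /dotp !mxE; apply: eq_bigr => i _; rewrite mxE. Qed.

Lemma dotpC x y : dotp x y = dotp y x.
Proof. by rewrite !dotpE; apply: eq_bigr => i _; rewrite mulrC. Qed.

Lemma dotpDl x y z : dotp (x + y) z = dotp x z + dotp y z.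
Proof. by rewrite !dotpE -big_split; apply: eq_bigr => i _; rewrite mxE mulrDl. Qed.

Lemma dotpZl (a : R) x y : dotp (a *: x) y = a * dotp x y.
Proof. by rewrite !dotpE mulr_sumr; apply: eq_bigr => i _; rewrite mxE mulrA. Qed.

Lemma dotpNl x y : dotp (- x) y = - dotp x y.
Proof. by rewrite -scaleN1r dotpZl mulN1r. Qed.

Lemma dotpBl x y z : dotp (x - y) z = dotp x z - dotp y z.
Proof. by rewrite dotpDl dotpNl. Qed.

Lemma dotp0l x : dotp 0 x = 0.
Proof. by rewrite -(scale0r (0 : vec)) dotpZl mul0r. Qed.

Lemma dotpDr x y z : dotp x (y + z) = dotp x y + dotp x z.
Proof. by rewrite dotpC dotpDl !(dotpC x). Qed.

Lemma dotpZr (a : R) x y : dotp x (a *: y) = a * dotp x y.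
Proof. by rewrite dotpC dotpZl dotpC. Qed.

Lemma dotpNr x y : dotp x (- y) = - dotp x y.
Proof. by rewrite dotpC dotpNl dotpC. Qed.

Lemma dotpBr x y z : dotp x (y - z) = dotp x y - dotp x z.
Proof. by rewrite dotpDr dotpNr. Qed.

Lemma dotp0r x : dotp x 0 = 0.
Proof. by rewrite dotpC dotp0l. Qed.

Lemma dotpp_ge0 x : 0 <= dotp x x.
Proof. by rewrite dotpE sumr_ge0 // => i _; rewrite -expr2 sqr_ge0. Qed.

Lemma dotpp_eq0 x : dotp x x = 0 -> x = 0.
Proof.
rewrite dotpE => /eqP; rewrite psumr_eq0 => [/allP x0|i _]; last first.
  by rewrite -expr2 sqr_ge0.
apply/rowP => i; rewrite mxE.
by have /implyP/(_ isT) := x0 i (mem_index_enum i); rewrite mulf_eq0 orbb => /eqP.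
Qed.

Lemma enorm_ge0 x : 0 <= enorm x.
Proof. exact: sqrtr_ge0. Qed.

Lemma enorm_sqr x : enorm x ^+ 2 = dotp x x.
Proof. by rewrite /enorm sqr_sqrtr // dotpp_ge0. Qed.

Lemma enorm_eq0 x : enorm x = 0 -> x = 0.
Proof. by move=> x0; apply: dotpp_eq0; rewrite -enorm_sqr x0 expr0n. Qed.

Lemma enormN x : enorm (- x) = enorm x.
Proof. by rewrite /enorm dotpNl dotpNr opprK. Qed.

Lemma enorm_le_sqr x (e : R) : 0 <= e -> (enorm x <= e) = (dotp x x <= e ^+ 2).
Proof. by move=> e0; rewrite -enorm_sqr ler_pXn2r ?nnegrE ?enorm_ge0. Qed.

Lemma cauchy_schwarz x y : dotp x y <= enorm x * enorm y.
Proof.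
have [/enorm_eq0->|x0] := eqVneq (enorm x) 0.
  by rewrite dotp0l mulr_ge0 ?enorm_ge0.
have [/enorm_eq0->|y0] := eqVneq (enorm y) 0.
  by rewrite dotp0r mulr_ge0 ?enorm_ge0.
have xy_gt0 : 0 < enorm x * enorm y.
  by rewrite mulr_gt0 // lt_def ?x0 ?y0 enorm_ge0.
have := dotpp_ge0 (enorm y *: x - enorm x *: y).
rewrite !dotpBl !dotpBr !dotpZl !dotpZr (dotpC y x) -!enorm_sqr => h.
by rewrite -(ler_pM2l xy_gt0); nra.
Qed.

Lemma enormD x y : enorm (x + y) <= enorm x + enorm y.
Proof.
rewrite enorm_le_sqr ?addr_ge0 ?enorm_ge0 // dotpDl !dotpDr (dotpC y x).
by rewrite sqrrD -!enorm_sqr; have := cauchy_schwarz x y; lra.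
Qed.

Lemma enormB_trans x y z : enorm (x - z) <= enorm (x - y) + enorm (y - z).
Proof. by rewrite -(subrKA y); apply: enormD. Qed.

Lemma norm_coord_le x i : `|x 0 i| <= `|x|.
Proof. by rewrite [leRHS]mx_normrE; apply: le_trans (le_bigmax _ _ (0, i)). Qed.

Lemma enorm_le_norm x : enorm x <= n%:R * `|x|.
Proof.
rewrite enorm_le_sqr ?mulr_ge0 // dotpE.
apply: (le_trans (y := \sum_(i < n) `|x| ^+ 2)).
  apply: ler_sum => i _; rewrite -expr2 -real_normK ?num_real //.
  by rewrite lerXn2r ?nnegrE ?norm_coord_le.
rewrite sumr_const card_ord exprMn -[_ *+ n]mulr_natl.
apply: ler_wpM2r; first exact: sqr_ge0.
by rewrite -natrX ler_nat; case: n => // k; rewrite leq_pmulr.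
Qed.

End InnerProduct.

Section Reflection.
Variables (R : realType) (n : nat) (H : 'M[R]_n).
Notation vec := 'rV[R]_n.
Implicit Types x y : vec.

Definition is_oproj x p := in_sub H p /\ forall h, in_sub H h -> dotp (x - p) h = 0.

Lemma in_subB x y : in_sub H x -> in_sub H y -> in_sub H (x - y).
Proof. by move=> Hx Hy; rewrite /in_sub addmx_sub // -scaleN1r scalemx_sub. Qed.

Lemma is_oproj_exists x : exists p, is_oproj x p.
Proof.
have [B B_free BH] : exists2 B : 'M[R]_(\rank H, n), row_free B & (B :=: H)%MS.
  by exists (row_base H); [exact: row_base_free | exact: eq_row_base].
pose G := B *m B^T.
have G_unit : G \in unitmx.
  rewrite -row_free_unit; apply: inj_row_free => v vG0.
  have : dotp (v *m B) (v *m B) = 0.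
    by rewrite /dotp trmx_mul mulmxA -(mulmxA v) -/G vG0 mul0mx mxE.
  by move/dotpp_eq0/eqP; rewrite mulmx_free_eq0 // => /eqP.
exists (x *m B^T *m invmx G *m B); split; first by rewrite /in_sub -BH submxMl.
move=> h; rewrite /in_sub -BH => /submxP [u ->].
rewrite /dotp trmx_mul mulmxBl !mulmxA -(mulmxA _ B B^T) -/G mulmxKV //.
by rewrite subrr mxE.
Qed.

Lemma is_oproj_uniq x p q : is_oproj x p -> is_oproj x q -> p = q.
Proof.
move=> [Hp p_orth] [Hq q_orth]; apply/eqP; rewrite -subr_eq0; apply/eqP/dotpp_eq0.
rewrite {1}(_ : p - q = (x - q) - (x - p)); last first.
  by rewrite opprB [RHS]addrC addrA subrK.
by rewrite dotpBl q_orth ?p_orth ?subrr //; apply: in_subB.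
Qed.

Lemma oprojP x : is_oproj x (oproj H x).
Proof. exact: (xgetPex 0 (is_oproj_exists x)). Qed.

Lemma oproj_sub x : in_sub H (oproj H x).
Proof. by case: (oprojP x). Qed.

Lemma oproj_orth x h : in_sub H h -> dotp (x - oproj H x) h = 0.
Proof. by case: (oprojP x) => _; apply. Qed.

Lemma oprojB x y : oproj H (x - y) = oproj H x - oproj H y.
Proof.
apply: is_oproj_uniq (oprojP _) _; split; first by apply: in_subB; apply: oproj_sub.
by move=> h Hh; rewrite opprD addrACA -opprD dotpBl !oproj_orth ?subrr.
Qed.

Lemma dotp_oprojl x y : dotp (oproj H x) y = dotp (oproj H x) (oproj H y).
Proof.
apply/eqP; rewrite -subr_eq0 -dotpBr dotpC.
by rewrite oproj_orth //; apply: oproj_sub.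
Qed.

Lemma reflB x y : refl H (x - y) = refl H x - refl H y.
Proof. by rewrite /refl oprojB scalerBr opprD addrACA -opprD. Qed.

Lemma dotp_reflC x y : dotp (refl H x) y = dotp x (refl H y).
Proof.
rewrite /refl dotpBl dotpBr dotpZl dotpZr dotp_oprojl (dotpC x (oproj H y)).
by rewrite (dotp_oprojl y x) (dotpC (oproj H y)).
Qed.

Lemma dotp_refl x : dotp (refl H x) (refl H x) = dotp x x.
Proof.
rewrite /refl !dotpBl !dotpBr !dotpZl !dotpZr (dotpC x (oproj H x)) -dotp_oprojl.
ring.
Qed.

End Reflection.

Section Approximation.
Variables (R : realType) (n : nat).
Notation vec := 'rV[R]_n.
Implicit Types (A B : set vec) (z v : vec) (t : R).

Lemma subset_conv_hull A : A `<=` conv_hull A.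
Proof. by move=> x Ax C _; apply. Qed.

Lemma conv_hull_halfspace A z v : conv_hull A z -> exists2 y, A y & dotp v (y - z) <= 0.
Proof.
move=> Az; apply: contrapT => noy.
suff : dotp v z < dotp v z by rewrite ltxx.
apply: (Az [set u | dotp v z < dotp v u]) => [a b l|y Ay]; last first.
  rewrite /= ltNge; apply/negP => vy; apply: noy; exists y => //.
  by rewrite dotpBr subr_le0.
rewrite !inE /= => va vb.
have -> : conv l a b = l%:num *: a + (1 - l%:num) *: b by [].
rewrite dotpDr !dotpZr.
have [ab|/ltW ba] := leP (dotp v a) (dotp v b).
  have : 0 <= (1 - l%:num) * (dotp v b - dotp v a) by rewrite mulr_ge0 ?subr_ge0.
  lra.
have : 0 <= l%:num * (dotp v a - dotp v b) by rewrite mulr_ge0 ?subr_ge0.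
lra.
Qed.

Lemma msymS (G : 'M[R]_n) A B : A `<=` B -> msym G A `<=` msym G B.
Proof. by move=> AB _ [x [y [Ax [Ay ->]]]]; exists x, y; do !split; apply: AB. Qed.

Lemma iter_msymS (Hs : nat -> 'M[R]_n) A B m :
  A `<=` B -> iter_msym Hs A m `<=` iter_msym Hs B m.
Proof. by move=> AB; elim: m => [|m IH] //=; apply: msymS. Qed.

(* For v = 0 this is plain t-approximation of B by A; quantifying over all
   tilts v is what makes it stable under [msym]. *)
Definition tilted_approx A B t := forall z, B z -> forall v,
  exists2 w, A w & dotp (w - z) (w - z) + 2 * dotp v (w - z) <= t ^+ 2.

Lemma tilted_approx_conv_hull A B t : B `<=` conv_hull A ->
  (forall y z, A y -> B z -> enorm (y - z) <= t) -> tilted_approx A B t.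
Proof.
move=> BA At z Bz v; have [y Ay vyz] := conv_hull_halfspace v (BA z Bz).
exists y => //; have yz := At y z Ay Bz.
have t0 := le_trans (enorm_ge0 _) yz.
by move: yz; rewrite enorm_le_sqr //; lra.
Qed.

(* The tilt used for y absorbs the cross term <e1, R_G e2>, so that the squared
   bound is halved; 3/4 is just a convenient ratio above 1/sqrt 2. *)
Lemma tilted_approx_msym (G : 'M[R]_n) A B t :
  tilted_approx A B t -> tilted_approx (msym G A) (msym G B) (t * (3 / 4)).
Proof.
move=> AB _ [x [y [Bx [By ->]]]] v.
have [w1 Aw1 le1] := AB x Bx (2 *: v).
have [w2 Aw2 le2] := AB y By (refl G (w1 - x + 2 *: v)).
exists (2^-1 *: (w1 + refl G w2)); first by exists w1, w2.
rewrite -scalerBr opprD addrACA -reflB.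
move: le1 le2; move: (w1 - x) (w2 - y) => e1 e2.
rewrite dotp_reflC -(dotp_refl G e2); move: (refl G e2) => r2.
rewrite !dotpZl !dotpZr !dotpDl !dotpDr !dotpZl (dotpC r2 e1) exprMn.
by have := sqr_ge0 t; lra.
Qed.

Lemma tilted_approx_iter (Hs : nat -> 'M[R]_n) A B t m : tilted_approx A B t ->
  tilted_approx (iter_msym Hs A m) (iter_msym Hs B m) (t * (3 / 4) ^+ m).
Proof.
move=> AB; elim: m => [|m IH] /=; first by rewrite expr0 mulr1.
by rewrite exprSr (mulrA t); apply: tilted_approx_msym.
Qed.

Lemma tilted_approx_enbhd A B t : 0 <= t -> tilted_approx A B t -> B `<=` enbhd A t.
Proof.
move=> t0 AB z Bz; have [w Aw] := AB z Bz 0; rewrite dotp0l mulr0 addr0 => wz.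
by exists w => //; rewrite -enormN opprB enorm_le_sqr.
Qed.

Lemma compact_enorm_diam K : compact K ->
  exists2 D, 0 <= D & forall y z, K y -> K z -> enorm (y - z) <= D.
Proof.
move=> /compact_bounded [M [_ KM]].
have {}KM x : K x -> `|x| <= `|M| + 1.
  by apply: KM; rewrite (le_lt_trans (ler_norm M)) ?ltrDl.
exists (n%:R * (2 * (`|M| + 1))); first by rewrite !mulr_ge0 ?addr_ge0.
move=> y z Ky Kz; apply: le_trans (enorm_le_norm _) _; rewrite ler_wpM2l //.
by rewrite mulr_natl mulr2n (le_trans (ler_normB y z)) ?lerD ?KM.
Qed.

End Approximation.

Section Hausdorff.
Variables (R : realType) (n : nat).
Implicit Types (A B C L : set 'rV[R]_n) (e : R).

Lemma enbhdS A B e : A `<=` B -> enbhd A e `<=` enbhd B e.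
Proof. by move=> AB x [y Ay xy]; exists y => //; apply: AB. Qed.

Lemma enbhd_le A e1 e2 : e1 <= e2 -> enbhd A e1 `<=` enbhd A e2.
Proof. by move=> e12 x [y Ay xy]; exists y => //; apply: le_trans e12. Qed.

Lemma enbhd_trans A B C e1 e2 :
  A `<=` enbhd B e1 -> B `<=` enbhd C e2 -> A `<=` enbhd C (e1 + e2).
Proof.
move=> AB BC x /AB [y /BC [z Cz yz] xy]; exists z => //.
by apply: le_trans (enormB_trans x y z) _; apply: lerD.
Qed.

Lemma hausdorff_dist_ge0 A L : 0 <= hausdorff_dist A L.
Proof.
rewrite /hausdorff_dist; set S := [set e | _].
have [[e Se]|S0] := pselect (S !=set0); first by apply: lb_le_inf => [|f []]; first exists e.
by rewrite (_ : S = set0) ?inf0 //; apply/seteqP; split => // e Se; apply: S0; exists e.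
Qed.

Lemma hausdorff_dist_le_enbhd A B L e : 0 <= e -> A `<=` B -> B `<=` enbhd A e ->
  hausdorff_dist A L <= hausdorff_dist B L + e.
Proof.
move=> e0 AB BA; rewrite /hausdorff_dist.
set SA := [set f | 0 <= f /\ A `<=` _ /\ _]; set SB := [set f | 0 <= f /\ B `<=` _ /\ _].
have [[f [f0 [AL LA]]]|SA0] := pselect (SA !=set0); last first.
  rewrite (_ : SA = set0) ?inf0; last by apply/seteqP; split => // f Sf; apply: SA0; exists f.
  by rewrite addr_ge0 ?hausdorff_dist_ge0.
have SB_f : SB (e + f).
  split; first exact: addr_ge0.
  split; first exact: enbhd_trans BA AL.
  apply: subset_trans LA (subset_trans (enbhdS AB) (enbhd_le _)).
  by rewrite lerDr.
rewrite -lerBlDr; apply: lb_le_inf => [|g [g0 [BL LB]]]; first by exists (e + f).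
rewrite lerBlDr; apply: ge_inf; first by exists 0 => ? [].
split; first exact: addr_ge0.
split; last exact: enbhd_trans LB BA.
apply: subset_trans (subset_trans AB BL) (enbhd_le _).
by rewrite lerDl.
Qed.

End Hausdorff.

Theorem corollary9 (R : realType) (n : nat) (K : set 'rV[R]_n)
  (H : nat -> 'M[R]_n) (L : set 'rV[R]_n) :
  K !=set0 -> compact K -> convex_set K ->
  compact L -> convex_set L ->
  hconv (iter_msym H K) L ->
  forall Kt : set 'rV[R]_n, Kt !=set0 -> compact Kt -> conv_hull Kt = K ->
    hconv (iter_msym H Kt) L.
Proof.
move=> _ cK _ _ _ KL Kt _ _ convKt.
have KtK : Kt `<=` K by rewrite -convKt; apply: subset_conv_hull.
have [D D0 diamK] := compact_enorm_diam cK.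
pose r m := D * (3 / 4) ^+ m.
have dist_le m : hausdorff_dist (iter_msym H Kt m) L <=
                 hausdorff_dist (iter_msym H K m) L + r m.
  have r0 : 0 <= r m by rewrite mulr_ge0 ?exprn_ge0.
  apply: (hausdorff_dist_le_enbhd L r0 (iter_msymS KtK)).
  apply: (tilted_approx_enbhd r0); apply: tilted_approx_iter.
  apply: tilted_approx_conv_hull; first by rewrite convKt.
  by move=> y z /KtK; apply: diamK.
apply: (@squeeze_cvgr _ _ _ _ (fun=> 0) (fun m => hausdorff_dist (iter_msym H K m) L + r m)).
- by near=> m; rewrite hausdorff_dist_ge0 dist_le.
- exact: cvg_cst.
- rewrite -[0 : R]addr0; apply: cvgD; first exact: KL.
  by apply: cvg_geometric; rewrite ger0_norm; lra.
Unshelve. all: end_near.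
Qed.
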